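(* Let $G$ be a finite digraph. If $\mathrm{Pol}(G)\not\models\Sigma_M$, then $G\le T_3$.
   Context: A digraph is $(V,E)$ with $E\subseteq V^2$. A polymorphism of arity $k$ of $H$ is a homomorphism $H^k\to H$, where $H^k$ has vertex set $V^k$ and edges $((u_i),(v_i))$ with $(u_i,v_i)\in E$ for all $i$; $\mathrm{Pol}(H)$ is the set of all polymorphisms. $\mathrm{Pol}(H)\models\Sigma_M$ means there exists a ternary $f\in\mathrm{Pol}(H)$ with $f(y,y,x)=f(x,x,x)=f(x,y,y)$ for all $x,y\in V$. $T_3=(\{0,1,2\},<)$. A primitive positive formula is $\exists y_1,\dots,y_n(\psi_1\wedge\dots\wedge\psi_m)$ with each $\psi_i$ being $\bot$, $z_1=z_2$, or $E(z_1,z_2)$; a pp power of $H$ of dimension $d$ is the digraph on $V^d$ with edges $\{(u,v):\phi(u,v)\text{ holds in }H\}$ for a pp formula $\phi(x_1,\dots,x_d,y_1,\dots,y_d)$. $H\le G$ means $G$ is homomorphically equivalent (homomorphisms in both directions) to a pp power of $H$. *)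

From mathcomp Require Import all_boot.
Set Implicit Arguments. Unset Strict Implicit. Unset Printing Implicit Defensive.

Definition ternary_pol (V : finType) (E : rel V) (f : V -> V -> V -> V) : Prop :=
  forall u1 u2 u3 v1 v2 v3 : V, E u1 v1 -> E u2 v2 -> E u3 v3 ->
    E (f u1 u2 u3) (f v1 v2 v3).

Definition Pol_models_SigmaM (V : finType) (E : rel V) : Prop :=
  exists f : V -> V -> V -> V, ternary_pol E f /\
    forall x y : V, f y y x = f x x x /\ f x x x = f x y y.

Inductive atom (X : Type) : Type :=
  | ABot : atom X
  | AEq : X -> X -> atom X
  | AEdge : X -> X -> atom X.

(* Variables of a pp formula phi(x_1..x_d, y_1..y_d) with n existentially
   quantified variables: inl (inl i) = x_i, inl (inr i) = y_i, inr j = bound var j. *)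
Definition ppvar (d n : nat) : Type := (('I_d + 'I_d) + 'I_n)%type.

Record ppformula (d : nat) : Type := PPFormula {
  pp_nbound : nat;
  pp_atoms : seq (atom (ppvar d pp_nbound)) }.

Definition atom_holds (V : Type) (E : V -> V -> bool) (X : Type)
  (s : X -> V) (a : atom X) : Prop :=
  match a with
  | ABot => False
  | AEq z1 z2 => s z1 = s z2
  | AEdge z1 z2 => E (s z1) (s z2)
  end.

Fixpoint List_In (X : Type) (a : X) (l : seq X) : Prop :=
  match l with [::] => False | b :: l' => b = a \/ List_In a l' end.

Definition pp_holds (V : finType) (E : rel V) (d : nat) (phi : ppformula d)
  (u v : {ffun 'I_d -> V}) : Prop :=
  exists w : 'I_(pp_nbound phi) -> V,
    let s := fun z : ppvar d (pp_nbound phi) =>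
      match z with
      | inl (inl i) => u i
      | inl (inr i) => v i
      | inr j => w j
      end in
    forall a, List_In a (pp_atoms phi) -> atom_holds E s a.

Definition is_hom (A B : Type) (EA : A -> A -> Prop) (EB : B -> B -> Prop)
  (h : A -> B) : Prop := forall a b, EA a b -> EB (h a) (h b).

Definition hom_equiv (A B : Type) (EA : A -> A -> Prop) (EB : B -> B -> Prop) : Prop :=
  (exists h : A -> B, is_hom EA EB h) /\ (exists g : B -> A, is_hom EB EA g).

(* H <= G : G is homomorphically equivalent to a pp power of H. *)
Definition pp_constructs (V : finType) (E : rel V) (W : finType) (F : rel W) : Prop :=
  exists (d : nat) (phi : ppformula d),
    hom_equiv (pp_holds E phi) (fun a b : W => F a b).

Definition T3_edge : rel 'I_3 := fun a b => (a < b)%N.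

(* A pp power of dimension |V|^3 whose vertices are the maps V^3 -> V: put an
   edge u -> v when some ternary polymorphism f satisfies u(a,b,c) = f(a,a,b)
   and v(a,b,c) = f(b,c,c). The projections onto the three coordinates form a
   copy of T_3 in it. A walk u1 -> u2 -> u3 -> u4 would make the polymorphism
   f of the middle edge satisfy f(y,y,x) = u2(y,x,x) = f(x,x,x) and
   f(x,y,y) = u3(x,x,y) = f(x,x,x), i.e. Sigma_M; so without Sigma_M there is
   no walk of length 3, and grading vertices by the length of the longest walk
   ending in them maps the pp power to T_3. *)
From mathcomp Require Import all_boot boolp.
Set Implicit Arguments. Unset Strict Implicit. Unset Printing Implicit Defensive.

Lemma List_In_cat (X : Type) (a : X) (s1 s2 : seq X) :
  List_In a (s1 ++ s2) <-> List_In a s1 \/ List_In a s2.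
Proof.
elim: s1 => [|b s1 IH] /=; first by split=> [|[]//]; right.
by rewrite IH; tauto.
Qed.

Lemma List_In_mapP (X : eqType) (Y : Type) (f : X -> Y) (s : seq X) (y : Y) :
  List_In y (map f s) <-> exists2 x, x \in s & f x = y.
Proof.
elim: s => [|b s IH] /=; first by split=> // [[]].
rewrite IH; split=> [[<-|[x xs <-]]|[x]]; first by exists b; rewrite ?mem_head.
  by exists x; rewrite // in_cons xs orbT.
by rewrite in_cons => /orP[/eqP-> <-|xs <-]; [left|right; exists x].
Qed.

Lemma no_walk3_hom_T3 (A : Type) (R : A -> A -> Prop) :
  (forall x y z w, R x y -> R y z -> R z w -> False) ->
  exists h : A -> 'I_3, is_hom R (fun a b => T3_edge a b) h.
Proof.
move=> no_walk3.
pose height x : nat :=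
  if `[< exists y z, R y z /\ R z x >] then 2
  else if `[< exists y, R y x >] then 1 else 0.
have height_lt3 x : height x < 3 by rewrite /height; repeat case: ifP.
exists (fun x => inord (height x)) => u v Ruv.
rewrite /T3_edge !inordK ?height_lt3 // /height.
case: asboolP => [[x [y [Rxy Ryu]]]|_].
  by case: (no_walk3 _ _ _ _ Rxy Ryu Ruv).
case: asboolP => [[x Rxu]|_].
  by case: asboolP => // [[]]; exists x, u.
by case: asboolP => //; case: asboolP => // [[]]; exists u.
Qed.

Section SigmaMPower.
Variables (V : finType) (E : rel V).

Local Notation triple := (V * V * V)%type.
Local Notation n := #|{: triple}|.
Local Notation idx := (@enum_rank triple).

Definition edge3 (t s : triple) : bool :=
  [&& E t.1.1 s.1.1, E t.1.2 s.1.2 & E t.2 s.2].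

(* The variables x_t, y_t, z_t (t in V^3) of the formula stand for u(t),
   v(t) and the value at t of the witnessing polymorphism. *)
Definition sigmaM_pp : ppformula n := @PPFormula n n
  ([seq AEdge (inr (idx ts.1)) (inr (idx ts.2)) |
      ts <- enum {: triple * triple} & edge3 ts.1 ts.2]
   ++ [seq AEq (inl (inl (idx t))) (inr (idx (t.1.1, t.1.1, t.1.2))) |
         t <- enum {: triple}]
   ++ [seq AEq (inl (inr (idx t))) (inr (idx (t.1.2, t.2, t.2))) |
         t <- enum {: triple}]).

Lemma sigmaM_ppP (u v : {ffun 'I_n -> V}) :
  pp_holds E sigmaM_pp u v <->
  exists f : V -> V -> V -> V, [/\ ternary_pol E f,
    forall a b c, u (idx (a, b, c)) = f a a b &
    forall a b c, v (idx (a, b, c)) = f b c c].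
Proof.
split=> [[w holds]|[f [pol_f uE vE]]].
  exists (fun a b c => w (idx (a, b, c))); split.
  - move=> a1 a2 a3 b1 b2 b3 e1 e2 e3.
    apply: (holds (AEdge (inr (idx (a1, a2, a3))) (inr (idx (b1, b2, b3))))).
    rewrite /= !List_In_cat !List_In_mapP; left.
    exists ((a1, a2, a3), (b1, b2, b3)) => //.
    by rewrite mem_filter mem_enum /edge3 /= e1 e2 e3.
  - move=> a b c.
    apply: (holds (AEq (inl (inl (idx (a, b, c)))) (inr (idx (a, a, b))))).
    rewrite /= !List_In_cat !List_In_mapP; right; left.
    by exists (a, b, c); rewrite ?mem_enum.
  - move=> a b c.
    apply: (holds (AEq (inl (inr (idx (a, b, c)))) (inr (idx (b, c, c))))).
    rewrite /= !List_In_cat !List_In_mapP; right; right.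
    by exists (a, b, c); rewrite ?mem_enum.
exists (fun j => let t := enum_val j in f t.1.1 t.1.2 t.2) => s a.
rewrite /= !List_In_cat !List_In_mapP.
case=> [[[t t'] + <-]|[][t _ <-]] /=; rewrite ?enum_rankK.
- by rewrite mem_filter => /andP[/and3P[e1 e2 e3] _]; apply: pol_f.
- by case: t => [[a1 a2] a3]; apply: uE.
- by case: t => [[a1 a2] a3]; apply: vE.
Qed.

Lemma sigmaM_of_walk3 (u1 u2 u3 u4 : {ffun 'I_n -> V}) :
  pp_holds E sigmaM_pp u1 u2 -> pp_holds E sigmaM_pp u2 u3 ->
  pp_holds E sigmaM_pp u3 u4 -> Pol_models_SigmaM E.
Proof.
move=> /sigmaM_ppP[f1 [_ _ v1E]] /sigmaM_ppP[f [pol_f u2E v2E]].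
move=> /sigmaM_ppP[f3 [_ u3E _]].
exists f; split=> // x y; split.
- by rewrite -(u2E y x x) v1E -(u2E x x x) v1E.
- by rewrite -(v2E x x y) u3E -(v2E x x x) u3E.
Qed.

Definition coord_ffun (k : 'I_3) : {ffun 'I_n -> V} :=
  [ffun j => let t := enum_val j in tnth [tuple t.1.1; t.1.2; t.2] k].

Lemma coord_ffun_hom :
  is_hom (fun k l => T3_edge k l) (pp_holds E sigmaM_pp) coord_ffun.
Proof.
move=> [[|[|[|k]]] ?] [[|[|[|l]]] ?] //= _; apply/sigmaM_ppP.
- by exists (fun x _ _ => x); split=> // *; rewrite ffunE enum_rankK.
- by exists (fun _ y _ => y); split=> // *; rewrite ffunE enum_rankK.
- by exists (fun _ _ z => z); split=> // *; rewrite ffunE enum_rankK.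
Qed.

End SigmaMPower.

Theorem mainTheorem7 (V : finType) (E : rel V) :
  ~ Pol_models_SigmaM E -> pp_constructs E T3_edge.
Proof.
move=> no_SigmaM; exists #|{: V * V * V}|, (sigmaM_pp E); split.
- apply: no_walk3_hom_T3 => u1 u2 u3 u4 e12 e23 e34.
  exact/no_SigmaM/(sigmaM_of_walk3 e12 e23 e34).
- by exists (coord_ffun V); apply: coord_ffun_hom.
Qed.
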